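(* For any $n,s\in\mathbb{N}$ and every real number $x$, $$\sum_{k=0}^{n-1}\frac{x^{2k}}{(2k+1)^s}=\sum_{k=1}^n(-1)^{k-1}\binom{n}{k}\,{}_{s+1}F_s\left(\{\tfrac12\}^{s},1-k;\{\tfrac32\}^{s};x^2\right).$$
   Context: $\mathbb{N}$ is the set of positive integers; $\{a\}^s$ denotes $a$ repeated $s$ times. The generalized hypergeometric function is ${}_{s+1}F_s(a_1,\ldots,a_{s+1};b_1,\ldots,b_s;x)=\sum_{i\geq 0}\frac{(a_1)_i\cdots(a_{s+1})_i}{(b_1)_i\cdots(b_s)_i}\frac{x^i}{i!}$, with $(a)_0=1$, $(a)_i=a(a+1)\cdots(a+i-1)$ for $i>0$; here since $1-k$ is a nonpositive integer the series is a finite sum. *)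

From mathcomp Require Import all_boot all_order all_algebra.
From mathcomp Require Import all_classical all_reals.
Set Implicit Arguments. Unset Strict Implicit. Unset Printing Implicit Defensive.
Import Order.TTheory GRing.Theory Num.Theory.
Local Open Scope ring_scope.

Definition poch {R : ringType} (a : R) (i : nat) : R :=
  \prod_(j < i) (a + j%:R).

Definition hyper_term {R : fieldType} (as_ bs : seq R) (x : R) (i : nat) : R :=
  (\prod_(a <- as_) poch a i) / (\prod_(b <- bs) poch b i) * x ^+ i / (i`!)%:R.

(* Partial sum of the series over 0 <= i <= N. When some upper parameter equals
   1 - k (k >= 1), every term with i >= k vanishes, so for N >= k-1 this is the
   (finite) value of the series. *)
Definition hyper_sum {R : fieldType} (as_ bs : seq R) (x : R) (N : nat) : R :=
  \sum_(0 <= i < N.+1) hyper_term as_ bs x i.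

Definition F_lemma {R : realType} (s k : nat) (x : R) : R :=
  hyper_sum (rcons (nseq s (2^-1)) (1 - k%:R)) (nseq s (3 / 2)) x k.

From mathcomp Require Import all_boot all_order all_algebra.
From mathcomp Require Import all_classical all_reals.
From mathcomp Require Import ring.
Import Order.TTheory GRing.Theory Num.Theory.
Local Open Scope ring_scope.

(* Since 1 - k is an upper parameter and (1/2)_i / (3/2)_i = 1/(2i+1), the
   hypergeometric function is the finite sum
     sum_(i < k) (-1)^i C(k-1, i) y^i / (2i+1)^s.
   Exchanging the two summations reduces the theorem to the binomial identity
     sum_(k = 1..n) (-1)^(k-1) C(n, k) C(k-1, i) = (-1)^i   for i < n,
   which follows by induction on n from Pascal's rule and the orthogonality
   relation  sum_j (-1)^j C(n, j) C(j, i) = (-1)^n [n = i]. *)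

Lemma big_nat_widen0 {R : nmodType} {m n1 n2 : nat} {F : nat -> R} :
  (n1 <= n2)%N -> (forall i, (n1 <= i)%N -> F i = 0) ->
  \sum_(m <= i < n1) F i = \sum_(m <= i < n2) F i.
Proof.
move=> le_n12 F0; rewrite (big_nat_widen _ _ _ _ _ le_n12) big_mkcond /=.
by apply: eq_bigr => i _; case: ltnP => // /F0->.
Qed.

Section AlternatingBinomialSums.
Variable R : pzRingType.

Lemma sum_alt_binom_bin n i :
  \sum_(0 <= j < n.+1) (-1) ^+ j *+ ('C(n, j) * 'C(j, i)) = (-1) ^+ n *+ (n == i) :> R.
Proof.
elim: n i => [|n IHn] i.
  by rewrite big_nat1 bin0 mul1n bin0n eq_sym.
pose S i := \sum_(0 <= j < n.+1) (-1) ^+ j *+ ('C(n, j) * 'C(j.+1, i)) : R.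
have -> : \sum_(0 <= j < n.+2) (-1) ^+ j *+ ('C(n.+1, j) * 'C(j, i))
          = \sum_(0 <= j < n.+1) (-1) ^+ j *+ ('C(n, j) * 'C(j, i)) - S i.
  rewrite big_nat_recl // [in RHS]big_nat_recl // !bin0.
  rewrite [in RHS](big_nat_widen0 (leqnSn n)) => [|k lenk]; last first.
    by rewrite bin_small ?mul0n // ltnS.
  rewrite -addrA -sumrB; congr (_ + _); apply: eq_bigr => j _.
  by rewrite binS mulnDl mulrnDr exprS mulN1r !mulNrn.
case: i => [|i].
  have -> : S 0%N = \sum_(0 <= j < n.+1) (-1) ^+ j *+ ('C(n, j) * 'C(j, 0)).
    by apply: eq_bigr => j _; rewrite !bin0.
  by rewrite subrr.
have -> : S i.+1 = \sum_(0 <= j < n.+1) (-1) ^+ j *+ ('C(n, j) * 'C(j, i.+1))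
                   + \sum_(0 <= j < n.+1) (-1) ^+ j *+ ('C(n, j) * 'C(j, i)).
  by rewrite -big_split; apply: eq_bigr => j _; rewrite binS mulnDr mulrnDr.
by rewrite opprD addrA subrr add0r !IHn exprS mulN1r mulNrn eqSS.
Qed.

Lemma sum_alt_binomS_bin n i :
  \sum_(0 <= k < n) (-1) ^+ k *+ ('C(n, k.+1) * 'C(k, i)) = (-1) ^+ i *+ (i < n) :> R.
Proof.
elim: n => [|n IHn]; first by rewrite big_geq.
have -> : \sum_(0 <= k < n.+1) (-1) ^+ k *+ ('C(n.+1, k.+1) * 'C(k, i))
          = \sum_(0 <= k < n) (-1) ^+ k *+ ('C(n, k.+1) * 'C(k, i))
            + \sum_(0 <= k < n.+1) (-1) ^+ k *+ ('C(n, k) * 'C(k, i)) :> R.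
  rewrite (big_nat_widen0 (leqnSn n)) => [|k lenk]; last first.
    by rewrite bin_small ?mul0n.
  by rewrite -big_split; apply: eq_bigr => k _; rewrite binS mulnDl mulrnDr.
rewrite IHn sum_alt_binom_bin ltnS.
by case: ltngtP => [||->]; rewrite ?mulr0n ?addr0 ?add0r.
Qed.

End AlternatingBinomialSums.

Lemma poch_recr (R : nzRingType) (a : R) i : poch a i.+1 = poch a i * (a + i%:R).
Proof. by rewrite /poch big_ord_recr. Qed.

Lemma poch_recl (R : nzRingType) (a : R) i : poch a i.+1 = a * poch (a + 1) i.
Proof.
rewrite /poch big_ord_recl addr0; congr (_ * _); apply: eq_bigr => j _.
by rewrite /= /bump add1n mulrS addrA.
Qed.

Lemma poch_oppn (R : comNzRingType) m i : poch (- m%:R : R) i = (-1) ^+ i *+ m ^_ i.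
Proof.
elim: i => [|i IHi]; first by rewrite /poch big_ord0.
rewrite poch_recr IHi ffactnSr; case: (leqP i m) => [le_im|lt_mi].
  by rewrite mulrnA exprS -[in RHS]mulr_natr natrB //; ring.
by rewrite ffact_small // !mulr0n mul0r.
Qed.

Lemma poch_gt0 (R : numDomainType) (a : R) i : 0 < a -> 0 < poch a i.
Proof.
move=> a_gt0; apply: prodr_gt0 => j _.
by rewrite (lt_le_trans a_gt0) // lerDl ler0n.
Qed.

Lemma poch_divS (R : numFieldType) (a : R) i :
  0 < a -> poch a i / poch (a + 1) i = a / (a + i%:R).
Proof.
move=> a_gt0; have ai_gt0 : 0 < a + i%:R by rewrite (lt_le_trans a_gt0) ?lerDl.
have P0 : poch (a + 1) i != 0 by rewrite gt_eqF ?poch_gt0 ?addr_gt0.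
by apply/eqP; rewrite eqr_div ?(gt_eqF ai_gt0) // -poch_recr poch_recl.
Qed.

Lemma poch_half_div (R : numFieldType) i :
  poch (2^-1 : R) i / poch (3 / 2) i = (2 * i + 1)%:R^-1.
Proof.
have -> : 3 / 2 = 2^-1 + 1 :> R by field.
rewrite poch_divS ?invr_gt0 ?ltr0n // natrD natrM; field.
by rewrite -natrM natr1 pnatr_eq0.
Qed.

Lemma hyper_term_F_lemma (R : numFieldType) s m (y : R) i :
  hyper_term (rcons (nseq s 2^-1) (1 - m.+1%:R)) (nseq s (3 / 2)) y i
  = (-1) ^+ i * 'C(m, i)%:R * (y ^+ i / (2 * i + 1)%:R ^+ s).
Proof.
rewrite /hyper_term big_rcons !big_nseq !iter_mulr_1.
have -> : 1 - m.+1%:R = - m%:R :> R by rewrite mulrS opprD addNKr.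
have B_neq0 : poch (3 / 2) i != 0 :> R by rewrite gt_eqF ?poch_gt0 ?divr_gt0 ?ltr0n.
have -> : poch 2^-1 i = poch (3 / 2) i / (2 * i + 1)%:R :> R.
  by rewrite -poch_half_div mulrCA divff ?mulr1.
rewrite /= poch_oppn -bin_ffact -[(-1) ^+ i *+ _]mulr_natr natrM expr_div_n.
have fact_neq0 : i`!%:R != 0 :> R by rewrite pnatr_eq0 -lt0n fact_gt0.
have odd_neq0 : (2 * i + 1)%:R != 0 :> R by rewrite pnatr_eq0 addn1.
move: (expf_neq0 s B_neq0) (expf_neq0 s odd_neq0) => Bs_neq0 Ns_neq0.
by field; rewrite fact_neq0 Bs_neq0 Ns_neq0.
Qed.

Lemma F_lemma_sumE {R : realType} (s : nat) (y : R) {m n : nat} : (m < n)%N ->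
  F_lemma s m.+1 y
  = \sum_(0 <= i < n) (-1) ^+ i * 'C(m, i)%:R * (y ^+ i / (2 * i + 1)%:R ^+ s).
Proof.
move=> lt_mn; rewrite /F_lemma /hyper_sum.
under eq_bigr do rewrite hyper_term_F_lemma.
have vanish i : (m < i)%N ->
    (-1) ^+ i * 'C(m, i)%:R * (y ^+ i / (2 * i + 1)%:R ^+ s) = 0.
  by move=> lt_mi; rewrite bin_small // mulr0 mul0r.
by rewrite -(big_nat_widen0 (leqnSn m.+1) vanish) (big_nat_widen0 lt_mn vanish).
Qed.

Theorem lemma3p1 (R : realType) (n s : nat) (x : R) :
  (0 < n)%N -> (0 < s)%N ->
  \sum_(0 <= k < n) x ^+ (2 * k) / ((2 * k + 1)%:R) ^+ s =
  \sum_(1 <= k < n.+1) (-1) ^+ (k - 1) * ('C(n, k))%:R * F_lemma s k (x ^+ 2).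
Proof.
move=> _ _; rewrite big_add1 /=.
under [RHS]eq_big_nat => k /andP[_ lt_kn].
  by rewrite subn1 /= (F_lemma_sumE s (x ^+ 2) lt_kn) mulr_sumr; over.
rewrite exchange_big /=; apply: eq_big_nat => i /andP[_ lt_in].
transitivity ((-1) ^+ i * ((x ^+ 2) ^+ i / (2 * i + 1)%:R ^+ s)
              * \sum_(0 <= k < n) (-1) ^+ k *+ ('C(n, k.+1) * 'C(k, i))).
  by rewrite sum_alt_binomS_bin lt_in mulr1n [RHS]mulrC signrMK -exprM.
by rewrite mulr_sumr; apply: eq_bigr => k _; ring.
Qed.
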